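(* Let $N\ge3$, $h=1/N$, $\rho_j=jh$, $I_j=[\rho_{j-1},\rho_j]$ ($j=1,\dots,N$, with $\rho_0\equiv\rho_N$ on $\mathbb{T}=\mathbb{R}/\mathbb{Z}$), and let $\mathbb{K}^h$ be the space of continuous periodic functions on $\mathbb{T}$ that are linear on each $I_j$. Let $\tau>0$ be arbitrary. Let $(\boldsymbol{X}^m,V^m,\kappa^m)\in[\mathbb{K}^h]^2\times\mathbb{K}^h\times\mathbb{K}^h$, $m\ge0$, be a sequence (with all segment lengths $|\boldsymbol{h}^m_j|>0$) such that for every $m\ge0$, $$\Big(\boldsymbol{n}^m\cdot\tfrac{\boldsymbol{X}^{m+1}-\boldsymbol{X}^m}{\tau},\phi^h\Big)_{\Gamma^m}=\big(V^{m+1},\phi^h\big)_{\Gamma^m}\quad\forall\phi^h\in\mathbb{K}^h,$$ $$\big(V^{m+1}\boldsymbol{n}^m,\boldsymbol{\omega}^h\big)_{\Gamma^m}=\Big(-\partial_s\kappa^{m+1}\,\boldsymbol{n}^m+\tfrac12(\kappa^{m+1})^2\partial_s\boldsymbol{X}^{m+1},\,\partial_s\boldsymbol{\omega}^h\Big)_{\Gamma^m}\quad\forall\boldsymbol{\omega}^h\in[\mathbb{K}^h]^2,$$ $$\Big(\tfrac{\kappa^{m+1}-\kappa^m}{\tau},\psi^h\Big)_{\Gamma^m}=\Big(\boldsymbol{n}^m\cdot\partial_s\big(\tfrac{\boldsymbol{X}^{m+1}-\boldsymbol{X}^m}{\tau}\big),\partial_s\psi^h\Big)_{\Gamma^m}-\Big(\big(\partial_s\boldsymbol{X}^{m+1}\cdot\partial_s\big(\tfrac{\boldsymbol{X}^{m+1}-\boldsymbol{X}^m}{\tau}\big)\big)\kappa^{m+1},\psi^h\Big)_{\Gamma^m}\quad\forall\psi^h\in\mathbb{K}^h.$$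 Define $W^m:=\tfrac14\sum_{j=1}^N|\boldsymbol{h}^m_j|\big[(\kappa^m(\rho_{j-1}))^2+(\kappa^m(\rho_j))^2\big]$. Then, without any restriction on $\tau$, $W^{m+1}\le W^m\le W^0$ for all $m\ge0$.
   Context: For $\boldsymbol{X}^m\in[\mathbb{K}^h]^2$, the polygon $\Gamma^m=\boldsymbol{X}^m(\mathbb{T})$ has edges $\boldsymbol{h}^m_j=\boldsymbol{X}^m(\rho_j)-\boldsymbol{X}^m(\rho_{j-1})$. In all expressions with subscript $\Gamma^m$ the discrete arc-length derivative is taken with respect to $\Gamma^m$: for $u\in\mathbb{K}^h$ (or $[\mathbb{K}^h]^2$), $\partial_s u|_{I_j}=\frac{u(\rho_j)-u(\rho_{j-1})}{|\boldsymbol{h}^m_j|}$; in particular $\partial_s\boldsymbol{X}^{m+1}|_{I_j}=\boldsymbol{h}^{m+1}_j/|\boldsymbol{h}^m_j|$. The normal is $\boldsymbol{n}^m|_{I_j}=-(\boldsymbol{h}^m_j)^\perp/|\boldsymbol{h}^m_j|$ with $(u_1,u_2)^\perp=(-u_2,u_1)$. Mass-lumped inner product: $(u,v)_{\Gamma^m}=\frac12\sum_{j=1}^N|\boldsymbol{h}^m_j|\big[(u\cdot v)(\rho_{j-1}^+)+(u\cdot v)(\rho_j^-)\big]$, one-sided limits taken within $I_j$. *)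

From HB Require Import structures.
From mathcomp Require Import all_boot all_order all_algebra.
From mathcomp Require Import reals.
Set Implicit Arguments. Unset Strict Implicit. Unset Printing Implicit Defensive.
Import Order.TTheory GRing.Theory Num.Theory.
Local Open Scope ring_scope.

(* A function u in K^h (continuous, periodic, piecewise linear on the uniform
   mesh rho_j = j/N) is represented by its nodal values u : 'I_N -> R, with
   u i = u(rho_i) (rho_0 = rho_N).  Vector-valued [K^h]^2 : 'I_N -> R * R.
   Element i (i : 'I_N) is the interval [rho_i, rho_(i+1 mod N)], i.e. the
   paper's I_(i+1); nxt i = i+1 mod N. *)

Section Defs.
Variable R : realType.
Variable N : nat.

Definition nxt (i : 'I_N) : 'I_N := ordS i.

Definition vadd (a b : R * R) : R * R := (a.1 + b.1, a.2 + b.2).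
Definition vsub (a b : R * R) : R * R := (a.1 - b.1, a.2 - b.2).
Definition vscal (k : R) (a : R * R) : R * R := (k * a.1, k * a.2).
Definition vdot (a b : R * R) : R := a.1 * b.1 + a.2 * b.2.
Definition vperp (a : R * R) : R * R := (- a.2, a.1).
Definition vnorm (a : R * R) : R := Num.sqrt (a.1 ^+ 2 + a.2 ^+ 2).

Definition edge (X : 'I_N -> R * R) (i : 'I_N) : R * R := vsub (X (nxt i)) (X i).
Definition elen (X : 'I_N -> R * R) (i : 'I_N) : R := vnorm (edge X i).

Definition normal (X : 'I_N -> R * R) (i : 'I_N) : R * R :=
  vscal (- (elen X i)^-1) (vperp (edge X i)).

Definition ds (X : 'I_N -> R * R) (u : 'I_N -> R) (i : 'I_N) : R :=
  (u (nxt i) - u i) / elen X i.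
Definition dsv (X : 'I_N -> R * R) (u : 'I_N -> R * R) (i : 'I_N) : R * R :=
  vscal (elen X i)^-1 (vsub (u (nxt i)) (u i)).

(* A (possibly discontinuous) function on the polygon, described by its
   one-sided values at the two ends of each element:
   f i false = value at the left end rho_i^+, f i true = value at rho_(i+1)^-. *)
Definition P1 (T : Type) (u : 'I_N -> T) : 'I_N -> bool -> T :=
  fun i e => if e then u (nxt i) else u i.
Definition P0 (T : Type) (c : 'I_N -> T) : 'I_N -> bool -> T :=
  fun i _ => c i.

Definition lumped (X : 'I_N -> R * R) (F : 'I_N -> bool -> R) : R :=
  2^-1 * \sum_(i < N) elen X i * (F i false + F i true).

Definition ip (X : 'I_N -> R * R) (f g : 'I_N -> bool -> R) : R :=
  lumped X (fun i e => f i e * g i e).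
Definition ipv (X : 'I_N -> R * R) (f g : 'I_N -> bool -> R * R) : R :=
  lumped X (fun i e => vdot (f i e) (g i e)).

Definition energy (X : 'I_N -> R * R) (k : 'I_N -> R) : R :=
  4^-1 * \sum_(i < N) elen X i * (k i ^+ 2 + k (nxt i) ^+ 2).

End Defs.

(** Test the three equations with [phi = V'], [omega = delta := (X' - X)/tau]
    and [psi = kappa'] (primes denote step [m+1]) and add them: the
    normal-velocity and [ds kappa'] terms cancel element by element, leaving
      [(kappa' - kappa, kappa') + tau (V', V') + tau/2 (kappa'^2, ds X' . ds delta) = 0]
    in the mass-lumped product on the old polygon.  On an element with old and
    new edges [h], [h'],
      [|h| (1 + tau ds X' . ds delta) = (|h|^2 + |h'|^2 - h.h') / |h| >= |h'|]
    by Cauchy-Schwarz, so the stretching term pays for the change of length;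
    with [2 (a - b) a >= a^2 - b^2] this gives [W^(m+1) <= W^m] for every [tau]. *)
From HB Require Import structures.
From mathcomp Require Import all_boot all_order all_algebra.
From mathcomp Require Import reals ring lra.
Set Implicit Arguments. Unset Strict Implicit. Unset Printing Implicit Defensive.
Import Order.TTheory GRing.Theory Num.Theory.
Local Open Scope ring_scope.

Section Vectors.
Variable R : realType.
Implicit Types a b : R * R.

Lemma sqr_vnorm a : vnorm a ^+ 2 = vdot a a.
Proof. by rewrite sqr_sqrtr ?addr_ge0 ?sqr_ge0 // /vdot !expr2. Qed.

Lemma vdot_le_vnorm a b : vdot a b <= vnorm a * vnorm b.
Proof.
rewrite /vnorm -sqrtrM ?addr_ge0 ?sqr_ge0 //; apply: le_trans (ler_norm _) _.
rewrite -sqrtr_sqr ler_sqrt ?mulr_ge0 ?addr_ge0 ?sqr_ge0 // -subr_ge0.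
have lagrange : (a.1 ^+ 2 + a.2 ^+ 2) * (b.1 ^+ 2 + b.2 ^+ 2) - vdot a b ^+ 2
    = (a.1 * b.2 - a.2 * b.1) ^+ 2 by rewrite /vdot; ring.
by rewrite lagrange sqr_ge0.
Qed.

Lemma vnorm_mul_le a b : vnorm a * vnorm b <= vnorm a ^+ 2 + vnorm b ^+ 2 - vdot a b.
Proof. have := vdot_le_vnorm a b; have := sqr_ge0 (vnorm a - vnorm b); nra. Qed.

End Vectors.

Section Lumped.
Variables (R : realType) (N : nat) (X : 'I_N -> R * R).
Implicit Types F G : 'I_N -> bool -> R.

Lemma eq_lumped F G : (forall i e, F i e = G i e) -> lumped X F = lumped X G.
Proof. by move=> FG; congr (_ * _); apply: eq_bigr => i _; rewrite !FG. Qed.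

Lemma lumpedD F G : lumped X (fun i e => F i e + G i e) = lumped X F + lumped X G.
Proof.
by rewrite /lumped -mulrDr -big_split; congr (_ * _); apply: eq_bigr => i _ /=; ring.
Qed.

Lemma lumpedZ c F : lumped X (fun i e => c * F i e) = c * lumped X F.
Proof.
rewrite /lumped mulrCA; congr (_ * _); rewrite mulr_sumr.
by apply: eq_bigr => i _ /=; ring.
Qed.

Lemma lumped_sub_eq0 F G :
  lumped X F = lumped X G -> lumped X (fun i e => F i e - G i e) = 0.
Proof.
move=> FG; rewrite (eq_lumped (G := fun i e => F i e + -1 * G i e)) => [|i e].
  by rewrite lumpedD lumpedZ FG mulN1r subrr.
by rewrite mulN1r.
Qed.

Lemma lumped_lincomb_eq0 F1 F2 F3 G c1 c2 c3 :
  lumped X F1 = 0 -> lumped X F2 = 0 -> lumped X F3 = 0 ->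
  (forall i e, G i e = c1 * F1 i e + c2 * F2 i e + c3 * F3 i e) ->
  lumped X G = 0.
Proof.
by move=> h1 h2 h3 /eq_lumped ->; rewrite !lumpedD !lumpedZ h1 h2 h3 !mulr0 !addr0.
Qed.

Lemma ler_lumped_mesh (Y : 'I_N -> R * R) F G :
  (forall i, elen Y i * (F i false + F i true) <= elen X i * (G i false + G i true)) ->
  lumped Y F <= lumped X G.
Proof. by move=> le_loc; rewrite ler_pM2l ?invr_gt0 ?ltr0n //; exact: ler_sum. Qed.

Lemma energy_lumped k : energy X k = 2^-1 * lumped X (fun i e => P1 k i e ^+ 2).
Proof. by rewrite /energy /lumped mulrA -invfM -natrM. Qed.

End Lumped.

Definition velocity (R : realType) (N : nat) (tau : R) (X0 X1 : 'I_N -> R * R)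
  (k : 'I_N) : R * R := vscal tau^-1 (vsub (X1 k) (X0 k)).

Section OneStep.
Variables (R : realType) (N : nat) (tau : R).
Variables (X0 X1 : 'I_N -> R * R) (V k0 k1 : 'I_N -> R).
Hypothesis tau_gt0 : 0 < tau.
Hypothesis elen0_gt0 : forall i, 0 < elen X0 i.

Hypothesis eq1 : forall phi : 'I_N -> R,
  ip X0 (fun i e => vdot (normal X0 i)
                      (vscal tau^-1 (vsub (P1 X1 i e) (P1 X0 i e))))
        (P1 phi)
  = ip X0 (P1 V) (P1 phi).
Hypothesis eq2 : forall omega : 'I_N -> R * R,
  ipv X0 (fun i e => vscal (P1 V i e) (normal X0 i)) (P1 omega)
  = ipv X0 (fun i e => vadd (vscal (- ds X0 k1 i) (normal X0 i))
                            (vscal (2^-1 * (P1 k1 i e) ^+ 2) (dsv X0 X1 i)))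
           (P0 (dsv X0 omega)).
Hypothesis eq3 : forall psi : 'I_N -> R,
  ip X0 (fun i e => (P1 k1 i e - P1 k0 i e) / tau) (P1 psi)
  = ip X0 (P0 (fun i => vdot (normal X0 i) (dsv X0 (velocity tau X0 X1) i)))
          (P0 (ds X0 psi))
    - ip X0 (fun i e => vdot (dsv X0 X1 i) (dsv X0 (velocity tau X0 X1) i)
                        * P1 k1 i e)
            (P1 psi).

Let stretch (i : 'I_N) : R := vdot (dsv X0 X1 i) (dsv X0 (velocity tau X0 X1) i).

Let dissipation (i : 'I_N) (e : bool) : R :=
  (P1 k1 i e - P1 k0 i e) * P1 k1 i e + tau * P1 V i e ^+ 2
  + tau / 2 * P1 k1 i e ^+ 2 * stretch i.

Lemma dissipation_eq0 : lumped X0 dissipation = 0.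
Proof.
have /lumped_sub_eq0 r1 := eq1 V.
have /lumped_sub_eq0 r2 := eq2 (velocity tau X0 X1).
have /eqP := eq3 k1; rewrite eq_sym subr_eq eq_sym -lumpedD => /eqP/lumped_sub_eq0 r3.
apply: (lumped_lincomb_eq0 (c1 := - tau) (c2 := tau) (c3 := tau) r1 r2 r3) => i e.
have tau_neq0 : tau != 0 by rewrite gt_eqF.
have elen_neq0 : elen X0 i != 0 by rewrite gt_eqF.
rewrite /dissipation /stretch /P1 /P0 /normal /ds /dsv /velocity.
rewrite /vdot /vscal /vsub /vadd /vperp.
by case: e => /=; field; rewrite tau_neq0 elen_neq0.
Qed.

Lemma elen_step_le i : elen X1 i <= elen X0 i * (1 + tau * stretch i).
Proof.
have l_gt0 := elen0_gt0 i; have tau_neq0 : tau != 0 by rewrite gt_eqF.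
have -> : elen X0 i * (1 + tau * stretch i)
    = (elen X0 i ^+ 2 + elen X1 i ^+ 2 - vdot (edge X0 i) (edge X1 i)) / elen X0 i.
  move: l_gt0; rewrite /elen (sqr_vnorm (edge X1 i)) => /gt_eqF l_neq0.
  rewrite /stretch /dsv /velocity /elen /vdot /vscal /vsub /edge /=.
  by field; rewrite tau_neq0 l_neq0.
by rewrite ler_pdivlMr // mulrC; exact: vnorm_mul_le.
Qed.

Lemma energy_step : energy X1 k1 <= energy X0 k0.
Proof.
rewrite !energy_lumped ler_pM2l ?invr_gt0 ?ltr0n //.
pose G i e := P1 k0 i e ^+ 2 + 2 * dissipation i e.
apply: (le_trans (ler_lumped_mesh (X := X0) (G := G) _)).
  move=> i; apply: le_trans (ler_wpM2r _ (elen_step_le i)) _.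
    by rewrite addr_ge0 ?sqr_ge0.
  rewrite -mulrA ler_pM2l // /G /dissipation /stretch /P1 /=.
  have := sqr_ge0 (k1 i - k0 i); have := sqr_ge0 (k1 (nxt i) - k0 (nxt i)).
  have := mulr_ge0 (ltW tau_gt0) (sqr_ge0 (V i)).
  have := mulr_ge0 (ltW tau_gt0) (sqr_ge0 (V (nxt i))).
  nra.
by rewrite lumpedD lumpedZ dissipation_eq0 mulr0 addr0.
Qed.

End OneStep.

Theorem theorem4p1 (R : realType) (N : nat) (hN : (3 <= N)%N) (tau : R)
  (htau : 0 < tau)
  (X : nat -> 'I_N -> R * R) (V kappa : nat -> 'I_N -> R)
  (hlen : forall (m : nat) (j : 'I_N), 0 < elen (X m) j)
  (eq1 : forall (m : nat) (phi : 'I_N -> R),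
     ip (X m)
        (fun i e => vdot (normal (X m) i)
                      (vscal tau^-1 (vsub (P1 (X m.+1) i e) (P1 (X m) i e))))
        (P1 phi)
     = ip (X m) (P1 (V m.+1)) (P1 phi))
  (eq2 : forall (m : nat) (omega : 'I_N -> R * R),
     ipv (X m)
         (fun i e => vscal (P1 (V m.+1) i e) (normal (X m) i))
         (P1 omega)
     = ipv (X m)
         (fun i e => vadd (vscal (- ds (X m) (kappa m.+1) i) (normal (X m) i))
                          (vscal (2^-1 * (P1 (kappa m.+1) i e) ^+ 2)
                                 (dsv (X m) (X m.+1) i)))
         (P0 (dsv (X m) omega)))
  (eq3 : forall (m : nat) (psi : 'I_N -> R),
     ip (X m)
        (fun i e => (P1 (kappa m.+1) i e - P1 (kappa m) i e) / tau)
        (P1 psi)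
     = ip (X m)
          (P0 (fun i => vdot (normal (X m) i)
                 (dsv (X m) (fun k => vscal tau^-1 (vsub (X m.+1 k) (X m k))) i)))
          (P0 (ds (X m) psi))
       - ip (X m)
          (fun i e => vdot (dsv (X m) (X m.+1) i)
                        (dsv (X m) (fun k => vscal tau^-1 (vsub (X m.+1 k) (X m k))) i)
                      * P1 (kappa m.+1) i e)
          (P1 psi)) :
  forall m : nat,
    energy (X m.+1) (kappa m.+1) <= energy (X m) (kappa m)
    /\ energy (X m) (kappa m) <= energy (X 0%N) (kappa 0%N).
Proof.
have step n := energy_step htau (hlen n) (eq1 n) (eq2 n) (eq3 n).
move=> m; split; first exact: step.
elim: m => [|m IH]; first exact: lexx.
exact: le_trans (step m) IH.
Qed.
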